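(* Consider the setting and the algorithm described in the context, with generated iterates $\{x^k\}$. Let $\bar x\in\mathcal{X}^*$ and suppose that $\nabla^2\psi$ is strictly continuous at $A\bar x-b$ relative to $A(\mathrm{dom}\,g)-b$ with modulus $L_\psi$, i.e. there is $\delta_0>0$ with $\|\nabla^2\psi(z)-\nabla^2\psi(z')\|\le L_\psi\|z-z'\|$ for all $z,z'\in\mathbb{B}(A\bar x-b,\delta_0)\cap(A(\mathrm{dom}\,g)-b)$; set $\varepsilon_0:=\delta_0/\|A\|$. Then for any $x^k\in\mathbb{B}(\bar x,\varepsilon_0/2)$, $\Lambda_k\le a_1L_\psi\|A\|\,\mathrm{dist}(x^k,\mathcal{X}^* )$, where $\Lambda_k:=a_1[-\lambda_{\min}(\nabla^2\psi(Ax^k-b))]_+$.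
   Context: Let $A\in\mathbb{R}^{m\times n}$ (nonzero), $b\in\mathbb{R}^m$, and let $\psi:\mathbb{R}^m\to(-\infty,\infty]$ and $g:\mathbb{R}^n\to(-\infty,\infty]$ be proper lower semicontinuous functions. Set $f(x):=\psi(Ax-b)$ and $F:=f+g$. Assume: (i) there is an open set $\mathcal{O}\supseteq\mathrm{dom}\,g$ such that $\psi$ is twice continuously differentiable on $A(\mathcal{O})-b$; (ii) $g$ is convex and continuous relative to $\mathrm{dom}\,g$; (iii) $\inf F>-\infty$ and $F$ is level bounded. $\partial$ denotes the limiting subdifferential. Let $\mathcal{P}g(x):=\arg\min_z\{\frac12\|z-x\|^2+g(z)\}$, $R(x):=x-\mathcal{P}g(x-\nabla f(x))$, $r(x):=\|R(x)\|$, $\mathcal{S}^*:=\{x\in\mathrm{dom}\,g:0\in\nabla f(x)+\partial g(x)\}$ and $\mathcal{X}^*:=\{x\in\mathcal{S}^*:\nabla^2\psi(Ax-b)\succeq0\}$. Write $[a]_+=\max(0,a)$, $\lambda_{\min}$ for the smallest eigenvalue, $\mathbb{B}(x,\delta)$ for the closed ball, $\|A\|$ for the spectral norm. Algorithm: parameters $a_1\ge1$, $a_2>0$, $\varrho\in[0,1)$, $\tau\ge\varrho$, $\eta,\beta,\sigma\in(0,1)$, $x^0\in\mathrm{dom}\,g$. At iteration $k$: $\mu_k:=a_2[r(x^k)]^{\varrho}$, $G_k:=\nabla^2 f(x^k)+a_1[-\lambda_{\min}(\nabla^2\psi(Ax^k-b))]_+A^\top A+\mu_kI$, $\Theta_k(x):=f(x^k)+\langle\nabla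 f(x^k),x-x^k\rangle+\frac12(x-x^k)^\top G_k(x-x^k)+g(x)$, $r_k(y):=\|y-\mathcal{P}g(y-\nabla f(x^k)-G_k(y-x^k))\|$. Choose $y^k\in\mathrm{dom}\,g$ with $\Theta_k(y^k)\le\Theta_k(x^k)$ and, if $\varrho\in(0,1)$, $r_k(y^k)\le\eta\min\{r(x^k),[r(x^k)]^{1+\tau}\}$; if $\varrho=0$, $\mathrm{dist}(0,\partial\Theta_k(y^k))\le\eta\, r(x^k)$. Set $d^k:=y^k-x^k$; let $m_k$ be the smallest nonnegative integer $m$ with $F(x^k)-F(x^k+\beta^md^k)\ge\sigma\beta^m\mu_k\|d^k\|^2$, $\alpha_k:=\beta^{m_k}$, and $x^{k+1}:=y^k$ if $F(y^k)<F(x^k+\alpha_kd^k)$, otherwise $x^{k+1}:=x^k+\alpha_kd^k$. The iterates $x^k$ lie in $\mathrm{dom}\,g$. *)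

From HB Require Import structures.
From mathcomp Require Import all_boot all_order all_algebra.
From mathcomp Require Import all_classical all_reals all_analysis.
Set Implicit Arguments. Unset Strict Implicit. Unset Printing Implicit Defensive.
Import Order.TTheory GRing.Theory Num.Theory.
Import numFieldNormedType.Exports.
Local Open Scope classical_set_scope.
Local Open Scope ring_scope.

Section Defs.
Variable R : realType.

Definition dotv n (u v : 'cV[R]_n) : R := (u^T *m v) 0 0.
Definition enorm n (v : 'cV[R]_n) : R := Num.sqrt (dotv v v).

Definition opnorm m n (M : 'M[R]_(m, n)) : R :=
  sup [set enorm (M *m v) | v in [set v : 'cV[R]_n | enorm v <= 1]].

Definition eball n (x : 'cV[R]_n) (d : R) : set 'cV[R]_n :=
  [set y | enorm (y - x) <= d].

(* distance to a set, valued in extended reals (dist(x, empty) = +oo) *)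
Definition setdist n (x : 'cV[R]_n) (S : set 'cV[R]_n) : \bar R :=
  ereal_inf [set (enorm (x - y))%:E | y in S].

Definition lambda_min m (H : 'M[R]_m) : R := inf [set a : R | eigenvalue H a].

Definition psd m (H : 'M[R]_m) : Prop := forall v : 'cV[R]_m, 0 <= dotv v (H *m v).

Definition pos_part (a : R) : R := Num.max 0 a.

Definition edom n (h : 'cV[R]_n -> \bar R) : set 'cV[R]_n := [set x | (h x < +oo)%E].
Definition proper_fun n (h : 'cV[R]_n -> \bar R) : Prop :=
  (forall x, (-oo < h x)%E) /\ edom h !=set0.
Definition convex_fun n (h : 'cV[R]_n -> \bar R) : Prop :=
  forall (x y : 'cV[R]_n) (t : R), 0 <= t <= 1 ->
    (h (t *: x + (1 - t) *: y)%R <= t%:E * h x + (1 - t)%:E * h y)%E.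

Definition frechet_subdiff n (h : 'cV[R]_n -> \bar R) (x v : 'cV[R]_n) : Prop :=
  h x \is a fin_num /\
  forall e : R, 0 < e -> exists2 d : R, 0 < d & forall y, enorm (y - x) <= d ->
    (h x + (dotv v (y - x) - e * enorm (y - x))%:E <= h y)%E.

Definition limiting_subdiff n (h : 'cV[R]_n -> \bar R) (x v : 'cV[R]_n) : Prop :=
  exists (xs vs : nat -> 'cV[R]_n),
    [/\ xs @ \oo --> x, (h \o xs) @ \oo --> h x,
        (forall k, frechet_subdiff h (xs k) (vs k)) & vs @ \oo --> v].

Section Problem.
Variables (m n : nat) (A : 'M[R]_(m, n)) (b : 'cV[R]_m).
Variables (psi : 'cV[R]_m -> \bar R) (gpsi : 'cV[R]_m -> 'cV[R]_m)
          (Hpsi : 'cV[R]_m -> 'M[R]_m) (g : 'cV[R]_n -> \bar R).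

Definition ff (x : 'cV[R]_n) : \bar R := psi (A *m x - b).
Definition FF (x : 'cV[R]_n) : \bar R := (ff x + g x)%E.
Definition gradf (x : 'cV[R]_n) : 'cV[R]_n := A^T *m gpsi (A *m x - b).
Definition hessf (x : 'cV[R]_n) : 'M[R]_n := A^T *m Hpsi (A *m x - b) *m A.

Definition prox (x : 'cV[R]_n) : 'cV[R]_n :=
  xget 0 [set z | forall w, ((2^-1 * enorm (z - x) ^+ 2)%:E + g z
                             <= (2^-1 * enorm (w - x) ^+ 2)%:E + g w)%E].

Definition resid (x : 'cV[R]_n) : 'cV[R]_n := x - prox (x - gradf x).
Definition rres (x : 'cV[R]_n) : R := enorm (resid x).

Definition Sstar : set 'cV[R]_n :=
  [set x | edom g x /\ exists v, limiting_subdiff g x v /\ gradf x + v = 0].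
Definition Xstar : set 'cV[R]_n :=
  [set x | Sstar x /\ psd (Hpsi (A *m x - b))].

Definition Lam (a1 : R) (xk : 'cV[R]_n) : R :=
  a1 * pos_part (- lambda_min (Hpsi (A *m xk - b))).
Definition muk (a2 rho : R) (xk : 'cV[R]_n) : R := a2 * (rres xk `^ rho).
Definition Gk (a1 a2 rho : R) (xk : 'cV[R]_n) : 'M[R]_n :=
  hessf xk + Lam a1 xk *: (A^T *m A) + (muk a2 rho xk)%:M.
Definition Theta (a1 a2 rho : R) (xk z : 'cV[R]_n) : \bar R :=
  (ff xk + (dotv (gradf xk) (z - xk)
            + 2^-1 * dotv (z - xk) (Gk a1 a2 rho xk *m (z - xk)))%:E + g z)%E.
Definition rk (a1 a2 rho : R) (xk y : 'cV[R]_n) : R :=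
  enorm (y - prox (y - gradf xk - Gk a1 a2 rho xk *m (y - xk))).

Definition alg_iterates (a1 a2 rho tau eta beta sigma : R)
    (x y : nat -> 'cV[R]_n) : Prop :=
  edom g (x 0%N) /\
  forall k : nat,
    let xk := x k in
    let mu := muk a2 rho xk in
    let d := y k - xk in
    let LS (j : nat) := (FF (xk + beta ^+ j *: d)
                         + (sigma * beta ^+ j * mu * enorm d ^+ 2)%:E <= FF xk)%E in
    [/\ edom g (y k),
        (Theta a1 a2 rho xk (y k) <= Theta a1 a2 rho xk xk)%E,
        (0 < rho -> rk a1 a2 rho xk (y k)
                      <= eta * Num.min (rres xk) (rres xk `^ (1 + tau))),
        (rho = 0 -> (setdist 0 [set v | limiting_subdiff (Theta a1 a2 rho xk) (y k) v]
                     <= (eta * rres xk)%:E)%E) &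
        exists mk : nat,
          [/\ LS mk, (forall j, (j < mk)%N -> ~ LS j) &
              let z := xk + beta ^+ mk *: d in
              ((FF (y k) < FF z)%E -> x k.+1 = y k) /\
              (~ (FF (y k) < FF z)%E -> x k.+1 = z)]].

End Problem.
End Defs.

(* For u in X^* the matrix Hpsi(A u - b) is positive semidefinite, so every
   eigenvalue of Hpsi(A x^k - b) is at least -||Hpsi(A x^k - b) - Hpsi(A u - b)||,
   which the strict continuity bounds by Lpsi ||A|| ||x^k - u|| as long as u
   lies within eps0 of xbar (x^k lies in dom g because dom g is convex).
   Points u of X^* farther than eps0 from xbar are farther from x^k than xbar
   itself, since ||x^k - xbar|| <= eps0/2, so xbar handles them. *)
From HB Require Import structures.
From mathcomp Require Import all_boot all_order all_algebra.
From mathcomp Require Import all_classical all_reals all_analysis.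
From mathcomp Require Import ring lra.
Import Order.TTheory GRing.Theory Num.Theory.
Import numFieldNormedType.Exports.
Local Open Scope classical_set_scope.
Local Open Scope ring_scope.

Section Euclidean.
Set Implicit Arguments. Unset Strict Implicit.
Variable R : realType.

Lemma dotvE n (u v : 'cV[R]_n) : dotv u v = \sum_i u i 0 * v i 0.
Proof. by rewrite /dotv !mxE; apply: eq_bigr => i _; rewrite mxE. Qed.

Lemma dotvC n (u v : 'cV[R]_n) : dotv u v = dotv v u.
Proof. by rewrite !dotvE; apply: eq_bigr => i _; rewrite mulrC. Qed.

Lemma dotvDr n (u v w : 'cV[R]_n) : dotv u (v + w) = dotv u v + dotv u w.
Proof. by rewrite !dotvE -big_split; apply: eq_bigr => i _; rewrite mxE mulrDr. Qed.

Lemma dotvZr n (u v : 'cV[R]_n) c : dotv u (c *: v) = c * dotv u v.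
Proof. by rewrite !dotvE mulr_sumr; apply: eq_bigr => i _; rewrite mxE mulrCA. Qed.

Lemma dotvNr n (u v : 'cV[R]_n) : dotv u (- v) = - dotv u v.
Proof. by rewrite -scaleN1r dotvZr mulN1r. Qed.

Lemma dotvDl n (u v w : 'cV[R]_n) : dotv (v + w) u = dotv v u + dotv w u.
Proof. by rewrite dotvC dotvDr !(dotvC u). Qed.

Lemma dotvZl n (u v : 'cV[R]_n) c : dotv (c *: v) u = c * dotv v u.
Proof. by rewrite dotvC dotvZr dotvC. Qed.

Lemma dotvNl n (u v : 'cV[R]_n) : dotv (- v) u = - dotv v u.
Proof. by rewrite dotvC dotvNr dotvC. Qed.

Lemma dotv0r n (u : 'cV[R]_n) : dotv u 0 = 0.
Proof. by rewrite dotvE big1 // => i _; rewrite mxE mulr0. Qed.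

Lemma dotvv_ge0 n (v : 'cV[R]_n) : 0 <= dotv v v.
Proof. by rewrite dotvE; apply: sumr_ge0 => i _; rewrite -expr2 sqr_ge0. Qed.

Lemma dotvv_eq0 n (v : 'cV[R]_n) : dotv v v = 0 -> v = 0.
Proof.
rewrite dotvE => /psumr_eq0P v2_eq0; apply/matrixP => i j; rewrite (ord1 j) mxE.
have /eqP : v i 0 * v i 0 = 0 by apply: v2_eq0 => // k _; rewrite -expr2 sqr_ge0.
by rewrite mulf_eq0 orbb => /eqP.
Qed.

Lemma dotv_sqr_le n (u v : 'cV[R]_n) : dotv u v ^+ 2 <= dotv u u * dotv v v.
Proof.
set a := dotv u u; set c := dotv v v; set d := dotv u v.
have [c0|c_neq0] := eqVneq c 0.
  by rewrite c0 mulr0 /d (dotvv_eq0 c0) dotv0r expr0n.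
have c_gt0 : 0 < c by rewrite lt_def c_neq0 dotvv_ge0.
(* expand 0 <= |c u - d v|^2 = c (a c - d^2) *)
have := dotvv_ge0 (c *: u - d *: v).
rewrite !(dotvDl, dotvDr, dotvNl, dotvNr, dotvZl, dotvZr) -/a -/c -/d (dotvC v u) -/d.
have -> : c * (c * a - d * d) + (c * - (d * d) - d * - (d * c))
  = c * (a * c - d ^+ 2) by ring.
by rewrite pmulr_rge0 // subr_ge0 mulrC.
Qed.

Lemma enorm_ge0 n (v : 'cV[R]_n) : 0 <= enorm v.
Proof. exact: sqrtr_ge0. Qed.

Lemma enorm_sqr n (v : 'cV[R]_n) : enorm v ^+ 2 = dotv v v.
Proof. by rewrite sqr_sqrtr // dotvv_ge0. Qed.

Lemma enorm0 n : enorm (0 : 'cV[R]_n) = 0.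
Proof. by rewrite /enorm dotv0r sqrtr0. Qed.

Lemma enorm_gt0 n (v : 'cV[R]_n) : v != 0 -> 0 < enorm v.
Proof.
move=> v_neq0; rewrite lt_def enorm_ge0 andbT; apply: contra v_neq0 => /eqP v0.
by rewrite (dotvv_eq0 (v := v)) // -enorm_sqr v0 expr0n.
Qed.

Lemma norm_dotv_le n (u v : 'cV[R]_n) : `|dotv u v| <= enorm u * enorm v.
Proof.
rewrite -sqrtr_sqr /enorm -sqrtrM ?dotvv_ge0 // ler_sqrt ?dotv_sqr_le //.
by rewrite mulr_ge0 ?dotvv_ge0.
Qed.

Lemma enormZ n (v : 'cV[R]_n) c : enorm (c *: v) = `|c| * enorm v.
Proof.
by rewrite /enorm dotvZl dotvZr mulrA -expr2 sqrtrM ?sqr_ge0 // sqrtr_sqr.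
Qed.

Lemma enormN n (v : 'cV[R]_n) : enorm (- v) = enorm v.
Proof. by rewrite -scaleN1r enormZ normrN normr1 mul1r. Qed.

Lemma enorm_distC n (u v : 'cV[R]_n) : enorm (u - v) = enorm (v - u).
Proof. by rewrite -enormN opprB. Qed.

Lemma enormD n (u v : 'cV[R]_n) : enorm (u + v) <= enorm u + enorm v.
Proof.
rewrite -(ger0_norm (addr_ge0 (enorm_ge0 u) (enorm_ge0 v))) -sqrtr_sqr.
rewrite /enorm ler_sqrt ?sqr_ge0 // -!/(enorm _) sqrrD !enorm_sqr.
rewrite !(dotvDl, dotvDr) (dotvC v u).
have := le_trans (ler_norm _) (norm_dotv_le u v); lra.
Qed.

Lemma enorm_mulmx_bounded m n (M : 'M[R]_(m, n)) :
  exists K, forall v, enorm (M *m v) <= K * enorm v.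
Proof.
set F := \sum_i dotv (row i M)^T (row i M)^T.
have F_ge0 : 0 <= F by apply: sumr_ge0 => i _; apply: dotvv_ge0.
exists (Num.sqrt F) => v; rewrite /enorm -sqrtrM // ler_sqrt ?mulr_ge0 ?dotvv_ge0 //.
rewrite dotvE mulr_suml; apply: ler_sum => i _.
have -> : (M *m v) i 0 = dotv (row i M)^T v.
  by rewrite dotvE mxE; apply: eq_bigr => j _; rewrite !mxE.
by rewrite -expr2 dotv_sqr_le.
Qed.

Lemma has_ubound_opnorm_set m n (M : 'M[R]_(m, n)) :
  has_ubound [set enorm (M *m v) | v in [set v : 'cV[R]_n | enorm v <= 1]].
Proof.
have [K MK] := enorm_mulmx_bounded M.
exists (Num.max K 0) => _ [v /= v_le1 <-]; apply: le_trans (MK v) _.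
apply: le_trans (_ : Num.max K 0 * enorm v <= _).
  by rewrite ler_wpM2r ?enorm_ge0 // le_max lexx.
by rewrite -[leRHS]mulr1 ler_wpM2l // le_max lexx orbT.
Qed.

Lemma opnorm_ge0 m n (M : 'M[R]_(m, n)) : 0 <= opnorm M.
Proof.
apply: (ub_le_sup (has_ubound_opnorm_set M)).
by exists 0; rewrite /= ?mulmx0 enorm0.
Qed.

Lemma enorm_mulmx_le m n (M : 'M[R]_(m, n)) (v : 'cV[R]_n) :
  enorm (M *m v) <= opnorm M * enorm v.
Proof.
have [->|v_neq0] := eqVneq v 0; first by rewrite mulmx0 !enorm0 mulr0.
have v_gt0 := enorm_gt0 v_neq0.
have := ub_le_sup (has_ubound_opnorm_set M)
  (ex_intro2 _ _ ((enorm v)^-1 *: v) _ erefl).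
rewrite -scalemxAr enormZ ger0_norm ?invr_ge0 ?enorm_ge0 // ler_pdivrMl // mulrC.
apply; rewrite /= enormZ ger0_norm ?invr_ge0 ?enorm_ge0 //.
by rewrite mulVf // gt_eqF.
Qed.

Lemma eigenvalue_ge_psd_dist m (H H' : 'M[R]_m) a :
  psd H' -> eigenvalue H a -> - a <= opnorm (H - H').
Proof.
move=> psdH' /eigenvalueP [v Hv v_neq0]; set w := v^T.
have w_gt0 : 0 < dotv w w.
  by rewrite -enorm_sqr exprn_gt0 // enorm_gt0 // trmx_eq0.
have Hw : dotv w (H *m w) = a * dotv w w.
  by rewrite /dotv /w trmxK mulmxA Hv -scalemxAl mxE.
have split_H : dotv w (H *m w) = dotv w (H' *m w) + dotv w ((H - H') *m w).
  by rewrite mulmxBl dotvDr dotvNr addrC subrK.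
have dist_bound : - dotv w ((H - H') *m w) <= opnorm (H - H') * dotv w w.
  apply: le_trans (_ : `|dotv w ((H - H') *m w)| <= _).
    by rewrite -normrN ler_norm.
  apply: le_trans (norm_dotv_le _ _) _.
  rewrite -enorm_sqr expr2 mulrCA ler_wpM2l ?enorm_ge0 //.
  exact: enorm_mulmx_le.
have : 0 <= (a + opnorm (H - H')) * dotv w w.
  by rewrite mulrDl -Hw; have := psdH' w; lra.
by rewrite pmulr_lge0 //; lra.
Qed.

Lemma pos_part_lambda_min_le m (H H' : 'M[R]_m) :
  psd H' -> pos_part (- lambda_min H) <= opnorm (H - H').
Proof.
move=> psdH'; rewrite /pos_part /lambda_min /inf opprK ge_max opnorm_ge0 /=.
set E := [set - a | a in _].
have [E_ne|E0] := pselect (E !=set0).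
  by apply: ge_sup => // _ [a Ha <-]; exact: eigenvalue_ge_psd_dist Ha.
rewrite (_ : E = set0) ?sup0 ?opnorm_ge0 //.
by apply/seteqP; split => z // Ez; case: E0; exists z.
Qed.

End Euclidean.

Section LocalErrorBound.
Set Implicit Arguments. Unset Strict Implicit.
Variable R : realType.

Lemma le_mul_setdist n (S : set 'cV[R]_n) (x : 'cV[R]_n) (a c : R) :
  S !=set0 -> 0 <= c -> (forall u, S u -> a <= c * enorm (x - u)) ->
  (a%:E <= c%:E * setdist x S)%E.
Proof.
move=> [u0 Su0] c_ge0 Sa.
have [c0|c_neq0] := eqVneq c 0.
  by rewrite c0 mul0e lee_fin; have := Sa _ Su0; rewrite c0 mul0r.
have c_gt0 : 0 < c by rewrite lt_def c_neq0.
rewrite -[a](divfK c_neq0) mulrC EFinM lee_pmul2l ?lte_fin //.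
apply/ereal_infP => _ [u Su <-]; rewrite lee_fin ler_pdivrMr // mulrC.
exact: Sa.
Qed.

(* Points of P far from xbar are farther from xk than xbar is. *)
Lemma le_mul_enorm_localize n (P : set 'cV[R]_n) (xbar xk : 'cV[R]_n) (a c r : R) :
  P xbar -> 0 <= c -> enorm (xk - xbar) <= r / 2 ->
  (forall u, P u -> enorm (u - xbar) <= r -> a <= c * enorm (xk - u)) ->
  forall u, P u -> a <= c * enorm (xk - u).
Proof.
move=> Pxbar c_ge0 xk_near near_bound u Pu.
have [far|near] := leP (enorm (xk - xbar)) (enorm (xk - u)).
  apply: le_trans (near_bound _ Pxbar _) _; last by rewrite ler_wpM2l.
  by rewrite subrr enorm0; have := enorm_ge0 (xk - xbar); lra.
apply: near_bound => //.
have -> : u - xbar = (u - xk) + (xk - xbar) by rewrite addrA subrK.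
apply: le_trans (enormD _ _) _; rewrite enorm_distC.
have := enorm_ge0 (xk - xbar); lra.
Qed.

Lemma eball_affine m n (A : 'M[R]_(m, n)) (b : 'cV[R]_m) (xbar u : 'cV[R]_n) d :
  0 <= d -> enorm (u - xbar) <= d / opnorm A -> eball (A *m xbar - b) d (A *m u - b).
Proof.
move=> d_ge0 u_near; rewrite /eball /= opprB addrA subrK -mulmxBr.
apply: le_trans (enorm_mulmx_le _ _) _.
have [->|A_neq0] := eqVneq (opnorm A) 0; first by rewrite mul0r.
by rewrite mulrC -ler_pdivlMr // lt_def A_neq0 opnorm_ge0.
Qed.

Lemma edom_convex n (h : 'cV[R]_n -> \bar R) (u w : 'cV[R]_n) (t : R) :
  convex_fun h -> (forall z, -oo < h z)%E ->
  edom h u -> edom h w -> 0 <= t <= 1 -> edom h (u + t *: (w - u)).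
Proof.
move=> h_convex h_gtNy hu hw t01; have := h_convex w u t t01.
have -> : t *: w + (1 - t) *: u = u + t *: (w - u).
  by rewrite scalerBr scalerBl scale1r addrCA addrC.
have [/fineK <- /fineK <-] : h w \is a fin_num /\ h u \is a fin_num.
  by rewrite !fin_numE (gt_eqF (h_gtNy w)) (gt_eqF (h_gtNy u)) (lt_eqF hw) (lt_eqF hu).
by rewrite -!EFinM -EFinD => /le_lt_trans; apply; apply: ltry.
Qed.

Lemma alg_iterates_edom m n (A : 'M[R]_(m, n)) (b : 'cV[R]_m)
    (psi : 'cV[R]_m -> \bar R) (gpsi : 'cV[R]_m -> 'cV[R]_m)
    (Hpsi : 'cV[R]_m -> 'M[R]_m) (g : 'cV[R]_n -> \bar R)
    (a1 a2 rho tau eta beta sigma : R) (x y : nat -> 'cV[R]_n) :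
  convex_fun g -> (forall z, -oo < g z)%E -> 0 <= beta -> beta <= 1 ->
  alg_iterates A b psi gpsi Hpsi g a1 a2 rho tau eta beta sigma x y ->
  forall k, edom g (x k).
Proof.
move=> g_convex g_gtNy beta_ge0 beta_le1 [x0_dom step]; elim=> // k IHk.
have [yk_dom _ _ _ [j [_ _ [to_y to_z]]]] := step k.
have [/to_y -> // | /to_z ->] := pselect (FF A b psi g (y k)
                                     < FF A b psi g (x k + beta ^+ j *: (y k - x k)))%E.
apply: edom_convex => //.
by rewrite exprn_ge0 ?exprn_ile1.
Qed.

Lemma Lam_le_enorm m n (A : 'M[R]_(m, n)) (b : 'cV[R]_m)
    (Hpsi : 'cV[R]_m -> 'M[R]_m) (D : set 'cV[R]_n) (xbar xk u : 'cV[R]_n)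
    (a1 L d : R) :
  0 <= a1 -> 0 <= L -> 0 <= d ->
  (forall z z', eball (A *m xbar - b) d z -> [set A *m v - b | v in D] z ->
                eball (A *m xbar - b) d z' -> [set A *m v - b | v in D] z' ->
     opnorm (Hpsi z - Hpsi z') <= L * enorm (z - z')) ->
  D xk -> D u -> psd (Hpsi (A *m u - b)) ->
  enorm (xk - xbar) <= d / opnorm A -> enorm (u - xbar) <= d / opnorm A ->
  Lam A b Hpsi a1 xk <= a1 * L * opnorm A * enorm (xk - u).
Proof.
move=> a1_ge0 L_ge0 d_ge0 Hlip Dxk Du psdu xk_near u_near.
have Hdist := Hlip _ _ (eball_affine b d_ge0 xk_near) (ex_intro2 _ _ _ Dxk erefl)
                       (eball_affine b d_ge0 u_near) (ex_intro2 _ _ _ Du erefl).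
rewrite opprB addrA subrK -mulmxBr in Hdist.
rewrite /Lam -!mulrA ler_wpM2l //.
apply: le_trans (pos_part_lambda_min_le _ psdu) _.
apply: le_trans Hdist _; rewrite ler_wpM2l //.
exact: enorm_mulmx_le.
Qed.

End LocalErrorBound.

Theorem lemma4p6 (R : realType) (m n : nat) (A : 'M[R]_(m, n)) (b : 'cV[R]_m)
    (psi : 'cV[R]_m -> \bar R) (gpsi : 'cV[R]_m -> 'cV[R]_m)
    (Hpsi : 'cV[R]_m -> 'M[R]_m) (g : 'cV[R]_n -> \bar R)
    (a1 a2 rho tau eta beta sigma : R) (x y : nat -> 'cV[R]_n)
    (xbar : 'cV[R]_n) (Lpsi delta0 : R) :
  A != 0 ->
  (* psi and g are proper and lower semicontinuous *)
  proper_fun psi -> lower_semicontinuous psi ->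
  proper_fun g -> lower_semicontinuous g ->
  (* (i): there is an open O containing dom g such that psi is twice
     continuously differentiable on (a neighbourhood V of) A(O) - b,
     with gradient gpsi and Hessian Hpsi *)
  (exists (O : set 'cV[R]_n) (V : set 'cV[R]_m) (psir : 'cV[R]_m -> R),
     [/\ open O, edom g `<=` O, open V,
         [set A *m u - b | u in O] `<=` V &
         forall z, V z ->
           [/\ psi z = (psir z)%:E,
               (differentiable psir z),
               (forall h, ('d psir z) h = dotv (gpsi z) h),
               (differentiable gpsi z) /\
               (forall h, ('d gpsi z) h = Hpsi z *m h) &
               {for z, continuous Hpsi}]]) ->
  (* (ii): g convex and continuous relative to dom g *)
  convex_fun g -> {within edom g, continuous g} ->
  (* (iii): inf F > -oo and F level bounded *)
  (exists c : R, forall u, (c%:E <= FF A b psi g u)%E) ->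
  (forall al : R, exists M : R, forall u,
       (FF A b psi g u <= al%:E)%E -> enorm u <= M) ->
  (* algorithm parameters *)
  1 <= a1 -> 0 < a2 -> 0 <= rho < 1 -> rho <= tau ->
  0 < eta < 1 -> 0 < beta < 1 -> 0 < sigma < 1 ->
  (* (x^k), (y^k) generated by the algorithm *)
  alg_iterates A b psi gpsi Hpsi g a1 a2 rho tau eta beta sigma x y ->
  (* xbar in X^*, Hessian of psi strictly continuous at A xbar - b relative
     to A(dom g) - b with modulus Lpsi *)
  Xstar A b gpsi Hpsi g xbar ->
  0 <= Lpsi -> 0 < delta0 ->
  (forall z z', eball (A *m xbar - b) delta0 z ->
                [set A *m u - b | u in edom g] z ->
                eball (A *m xbar - b) delta0 z' ->
                [set A *m u - b | u in edom g] z' ->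
     opnorm (Hpsi z - Hpsi z') <= Lpsi * enorm (z - z')) ->
  forall k : nat, eball xbar ((delta0 / opnorm A) / 2) (x k) ->
    ((Lam A b Hpsi a1 (x k))%:E
       <= (a1 * Lpsi * opnorm A)%:E * setdist (x k) (Xstar A b gpsi Hpsi g))%E.
Proof.
move=> _ _ _ [g_gtNy _] _ _ g_convex _ _ _ a1_ge1 _ _ _ _ /andP[beta_gt0 beta_lt1]
  _ iterates Xxbar Lpsi_ge0 /ltW delta0_ge0 Hlip k xk_near.
have a1_ge0 : 0 <= a1 by apply: le_trans a1_ge1.
have c_ge0 : 0 <= a1 * Lpsi * opnorm A by rewrite !mulr_ge0 ?opnorm_ge0.
have x_dom := alg_iterates_edom g_convex g_gtNy
  (ltW beta_gt0) (ltW beta_lt1) iterates.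
set r := delta0 / opnorm A in xk_near.
have xk_in_ball : enorm (x k - xbar) <= r.
  have : 0 <= r by rewrite divr_ge0 ?opnorm_ge0.
  by move: xk_near; rewrite /eball /=; lra.
apply: le_mul_setdist; [by exists xbar | exact: c_ge0 |].
apply: le_mul_enorm_localize Xxbar c_ge0 xk_near _ => u [[u_dom _] psd_u] u_near.
exact: Lam_le_enorm a1_ge0 Lpsi_ge0 delta0_ge0 Hlip (x_dom k) u_dom psd_u
  xk_in_ball u_near.
Qed.
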